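(* Consider $P(\omega)$ with the Michael topology. Assume that $[\omega]^{<\omega}\subseteq Y\subseteq P(\omega)$, $Y$ is countable, and $\mathcal{U}$ is a family of open subsets of $P(\omega)$ such that each finite subset of $Y$ is included in some member of $\mathcal{U}$. Then there are natural numbers $m_0<m_1<\cdots$ and (not necessarily distinct) $U_0,U_1,\ldots\in\mathcal{U}$ such that: (1) for each $y\in Y$, $y\in U_n$ for all but finitely many $n$; (2) for each $x\subseteq\omega$ and each $n$, if $x\cap(m_n,m_{n+1})=\emptyset$ then $x\in U_n$.
   Context: $P(\omega)$ is identified with the Cantor space $2^\omega$ via characteristic functions; this gives the Cantor topology on $P(\omega)$, with basic open sets $[s,n]=\{x\in P(\omega): x\cap\{0,\dots,n-1\}=s\}$ for $n\in\omega$, $s\subseteq\{0,\dots,n-1\}$. The Michael topology on $P(\omega)$ is the finer topology obtained from the Cantor topology by additionally declaring every infinite subset of $\omega$ (every element of $[\omega]^\omega$) to be an isolated point. $[\omega]^{<\omega}$ denotes the set of finite subsets of $\omega$. For natural numbers $a<b$, $(a,b)=\{k\in\omega : a<k<b\}$. *)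

(* P(omega) is identified with 2^omega: a subset of omega is
   its characteristic function  nat -> bool.  Subsets of P(omega) are
   predicates  (nat -> bool) -> Prop. *)
From Stdlib Require Import List Arith.

Definition Pw := nat -> bool.
Definition PwSet := Pw -> Prop.

Definition finite_sub (x : Pw) : Prop := exists n, forall k, x k = true -> k < n.
Definition infinite_sub (x : Pw) : Prop := ~ finite_sub x.

Definition cantor_open (U : PwSet) : Prop :=
  forall x, U x -> exists n, forall z, (forall k, k < n -> z k = x k) -> U z.

(* Michael topology: generated by the Cantor open sets together with the
   singletons {a} for infinite a.  Its open sets are exactly the unions
   V \cup A with V Cantor open and A a set of infinite subsets of omega. *)
Definition michael_open (U : PwSet) : Prop :=
  exists (V A : PwSet), cantor_open V /\ (forall a, A a -> infinite_sub a) /\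
    (forall x, U x <-> V x \/ A x).

Definition countable_set (Y : PwSet) : Prop :=
  exists f : nat -> Pw, forall y, Y y -> exists n, f n = y.

(* A finite F ⊆ Y together with all subsets of {0..m} is a finite subset of
   Y, so it lies in some U of the family.  U is Michael open and the subsets
   of {0..m} are finite, hence Cantor-interior points of U; with a uniform
   radius b for these finitely many points, every x with x ∩ (m, b) = ∅
   agrees below b with its trace on {0..m} and so lies in U.  Iterating this
   step along an enumeration of Y, covering its first n points at stage n,
   yields the blocks m_0 < m_1 < ... and the sets U_n. *)
From Stdlib Require Import List Arith Lia ClassicalEpsilon.

Definition vanishes_between (x : Pw) (a b : nat) : Prop :=
  forall k, a < k -> k < b -> x k = false.

Definition add_point (m : nat) (x : Pw) : Pw :=
  fun k => if k =? m then true else x k.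

Fixpoint subsets_below (m : nat) : list Pw :=
  match m with
  | 0 => (fun _ => false) :: nil
  | S m => subsets_below m ++ map (add_point m) (subsets_below m)
  end.

Lemma subsets_below_vanish m z k : In z (subsets_below m) -> m <= k -> z k = false.
Proof.
  revert z; induction m as [|m IH]; simpl; intros z Hz Hk.
  - now destruct Hz as [<-|[]].
  - apply in_app_or in Hz as [Hz|Hz].
    + apply IH; [exact Hz | lia].
    + apply in_map_iff in Hz as [x [<- Hx]]; unfold add_point.
      destruct (Nat.eqb_spec k m); [lia|]. apply IH; [exact Hx | lia].
Qed.

Lemma subsets_below_finite m z : In z (subsets_below m) -> finite_sub z.
Proof.
  intros Hz; exists m; intros k Hk.
  destruct (Nat.lt_ge_cases k m) as [Hlt|Hge]; [exact Hlt|].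
  now rewrite (subsets_below_vanish m z k Hz Hge) in Hk.
Qed.

Lemma subsets_below_cover m (x : Pw) :
  exists z, In z (subsets_below m) /\ forall k, k < m -> z k = x k.
Proof.
  induction m as [|m [z [Hz Hzx]]].
  - exists (fun _ => false); split; [now left | intros; lia].
  - destruct (x m) eqn:Hxm.
    + exists (add_point m z); split.
      * apply in_or_app; right; now apply in_map.
      * intros k Hk; unfold add_point.
        destruct (Nat.eqb_spec k m) as [->|]; [easy | apply Hzx; lia].
    + exists z; split; [apply in_or_app; now left|].
      intros k Hk; destruct (Nat.eq_dec k m) as [->|].
      * rewrite Hxm; apply (subsets_below_vanish m); auto.
      * apply Hzx; lia.
Qed.

Lemma uniform_bound_list {A : Type} (P : A -> nat -> Prop) (l : list A) :
  (forall a N N', N <= N' -> P a N -> P a N') ->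
  (forall a, In a l -> exists N, P a N) ->
  exists N, forall a, In a l -> P a N.
Proof.
  intros Hmono; induction l as [|a l IH]; intros Hl.
  - exists 0; intros ? [].
  - destruct (Hl a (or_introl eq_refl)) as [Na Ha].
    destruct IH as [Nl HNl]; [intros b Hb; apply Hl; now right|].
    exists (max Na Nl); intros b [<-|Hb].
    + apply (Hmono _ Na); [lia | exact Ha].
    + apply (Hmono _ Nl); [lia | now apply HNl].
Qed.

Lemma michael_open_finite_interior (U : PwSet) (z : Pw) :
  michael_open U -> finite_sub z -> U z ->
  exists n, forall w, (forall k, k < n -> w k = z k) -> U w.
Proof.
  intros [V [A [HV [HA HU]]]] Hz HUz.
  destruct (proj1 (HU z) HUz) as [HVz|HAz]; [|now destruct (HA z HAz)].
  destruct (HV z HVz) as [n Hn]; exists n; intros w Hw.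
  apply HU; left; now apply Hn.
Qed.

Lemma michael_open_gap (U : PwSet) (a : nat) :
  michael_open U -> (forall z, In z (subsets_below (S a)) -> U z) ->
  exists b, a < b /\ forall x, vanishes_between x a b -> U x.
Proof.
  intros HU Hpre.
  destruct (uniform_bound_list
              (fun z N => forall w, (forall k, k < N -> w k = z k) -> U w)
              (subsets_below (S a))) as [N HN].
  - intros z N N' HNN' Hz w Hw; apply Hz; intros k Hk; apply Hw; lia.
  - intros z Hz; apply michael_open_finite_interior; auto.
    now apply (subsets_below_finite (S a)).
  - exists (S (max a N)); split; [lia|]; intros x Hx.
    destruct (subsets_below_cover (S a) x) as [z [Hz Hzx]].
    apply (HN z Hz); intros k Hk.
    destruct (Nat.lt_ge_cases k (S a)).
    + symmetry; now apply Hzx.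
    + rewrite (subsets_below_vanish (S a) z k Hz) by lia; apply Hx; lia.
Qed.

Lemma countable_enum_onto (Y : PwSet) (y0 : Pw) :
  countable_set Y -> Y y0 ->
  exists g : nat -> Pw, (forall j, Y (g j)) /\ forall y, Y y -> exists j, g j = y.
Proof.
  intros [f Hf] Hy0.
  exists (fun j => if excluded_middle_informative (Y (f j)) then f j else y0).
  split.
  - intros j; now destruct excluded_middle_informative.
  - intros y Hy; destruct (Hf y Hy) as [j <-]; exists j.
    now destruct excluded_middle_informative.
Qed.

Section Blocks.

Variables (Y : PwSet) (UU : PwSet -> Prop).
Hypothesis finite_in_Y : forall x, finite_sub x -> Y x.
Hypothesis UU_open : forall U, UU U -> michael_open U.
Hypothesis UU_covers : forall l : list Pw, (forall y, In y l -> Y y) ->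
  exists U, UU U /\ forall y, In y l -> U y.

Lemma block_step (l : list Pw) (m : nat) :
  (forall y, In y l -> Y y) ->
  exists p : PwSet * nat, m < snd p /\ UU (fst p) /\
    (forall y, In y l -> fst p y) /\
    (forall x, vanishes_between x m (snd p) -> fst p x).
Proof.
  intros HlY.
  destruct (UU_covers (subsets_below (S m) ++ l)) as [U [HUU HU]].
  { intros y Hy; apply in_app_or in Hy as [Hy|Hy]; [|now apply HlY].
    apply finite_in_Y; now apply (subsets_below_finite (S m)). }
  destruct (michael_open_gap U m) as [b [Hmb Hb]]; auto.
  { intros z Hz; apply HU, in_or_app; now left. }
  exists (U, b); simpl; repeat split; auto.
  intros y Hy; apply HU, in_or_app; now right.
Qed.

End Blocks.

Theorem lemma4p5 (Y : PwSet) (UU : PwSet -> Prop) :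
  (forall x, finite_sub x -> Y x) ->
  countable_set Y ->
  (forall U, UU U -> michael_open U) ->
  (forall l : list Pw, (forall y, In y l -> Y y) ->
     exists U, UU U /\ forall y, In y l -> U y) ->
  exists (m : nat -> nat) (Us : nat -> PwSet),
    (forall n, m n < m (S n)) /\
    (forall n, UU (Us n)) /\
    (forall y, Y y -> exists N, forall n, N <= n -> Us n y) /\
    (forall (x : Pw) n,
       (forall k, m n < k -> k < m (S n) -> x k = false) -> Us n x).
Proof.
  intros HF HY HUo HUl.
  assert (Hempty : Y (fun _ => false)) by (apply HF; exists 0; discriminate).
  destruct (countable_enum_onto Y _ HY Hempty) as [g [HgY Hg]].
  destruct (choice (fun (nm : nat * nat) (p : PwSet * nat) =>
      snd nm < snd p /\ UU (fst p) /\
      (forall y, In y (map g (seq 0 (S (fst nm)))) -> fst p y) /\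
      (forall x, vanishes_between x (snd nm) (snd p) -> fst p x)))
    as [step Hstep].
  { intros [n m]; apply (block_step Y UU HF HUo HUl).
    intros y Hy; apply in_map_iff in Hy as [j [<- _]]; apply HgY. }
  set (mm := fix mm n := match n with 0 => 0 | S n => snd (step (n, mm n)) end).
  exists mm, (fun n => fst (step (n, mm n))).
  split; [|split; [|split]].
  - intros n; apply (Hstep (n, mm n)).
  - intros n; apply (Hstep (n, mm n)).
  - intros y Hy; destruct (Hg y Hy) as [j <-]; exists j; intros n Hn.
    apply (proj1 (proj2 (proj2 (Hstep (n, mm n))))), in_map, in_seq; simpl; lia.
  - intros x n; apply (Hstep (n, mm n)).
Qed.
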